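(* Let $\mathcal M=(M,<,+,0,\ldots)$ be a definably complete locally o-minimal expansion of an ordered group. Let $(G,\tau_G)$ be a definable topological group, $(X,\tau_X)$ a definable topological space, and $\mathfrak a:G\times X\to X$ a definable continuous left $G$-action. Then the definable quotient of $X$ by $G$ exists. Furthermore, if $X$ is a definable group, $G$ is a definable normal subgroup of $X$ and $\mathfrak a$ is induced by the multiplication of $X$, then the definable quotient space is a definable topological group with multiplication $g_1G\cdot g_2G=g_1g_2G$.
   Context: ''Definable'' means definable in $\mathcal M$ with parameters. $\mathcal M$ is an expansion of an ordered group with dense order without endpoints; locally o-minimal: for every definable $Y\subseteq M$ and $a\in M$ there is an open interval $I\ni a$ with $Y\cap I$ a finite union of points and open intervals; definably complete: every definable subset of $M$ has sup and inf in $M\cup\{\pm\infty\}$. A definable topological space is a definable set with a topology having a definable family as open base. A definable topological group is a definable group (underlying set and multiplication definable) with a definable topology making multiplication and inversion continuous. The definable (left) quotient of $X$ by $G$ is a pair of a definable topological space $(Q,\tau_Q)$ and a definable continuous map $\pi:X\to Q$ such that for every definable topological space $(T,\tau_T)$ and definable continuous $\varphi:X\to T$ with $\varphi(gx)=\varphi(x)$ for all $g\in G$, $x\in X$, there is a definable continuous $\psi:Q\to T$ with $\varphi=\psi\circ\pi$. *)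

From Stdlib Require List.
From mathcomp Require Import all_boot.

Set Implicit Arguments.
Unset Strict Implicit.
Unset Printing Implicit Defensive.

(* Subsets of M^n are predicates on sequences (tuples are lists of length n). *)
Definition mset (M : Type) := seq M -> Prop.

Section Defs.
Variable M : Type.

Definition is_ordered_group (lt : M -> M -> Prop) (add : M -> M -> M)
    (zero : M) : Prop :=
  [/\ (forall x y z, add x (add y z) = add (add x y) z),
      (forall x, add zero x = x /\ add x zero = x),
      (forall x, exists y, add x y = zero /\ add y x = zero),
      (forall x, ~ lt x x) /\ (forall x y z, lt x y -> lt y z -> lt x z)
        /\ (forall x y, lt x y \/ x = y \/ lt y x)
    & (forall x y z, lt x y -> lt (add z x) (add z y) /\ lt (add x z) (add y z))].

Definition dense_no_endpoints (lt : M -> M -> Prop) : Prop :=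
  (forall x y, lt x y -> exists z, lt x z /\ lt z y) /\
  (forall x, exists y z, lt y x /\ lt x z).

(* A "structure" on M in the sense of van den Dries (Tame topology,
   Ch. 1): D n is a Boolean algebra of subsets of M^n, closed under
   cartesian product with M on either side, containing the diagonals,
   closed under projection.  Such a family is exactly the family of sets
   definable (with parameters, as all singletons are included) in some
   first-order expansion of M.                                          *)
Definition is_structure (D : nat -> mset M -> Prop) : Prop :=
  (forall n A, D n A -> forall s, A s -> size s = n) /\
      (forall n, D n (fun s => size s = n)) /\
      (forall n A B, D n A -> D n B -> D n (fun s => A s \/ B s)) /\
      (forall n A, D n A -> D n (fun s => size s = n /\ ~ A s)) /\
      (forall n A, D n A -> D n.+1 (fun s => exists x t, s = x :: t /\ A t)) /\
      (forall n A, D n A -> D n.+1 (fun s => exists t x, s = rcons t x /\ A t)) /\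
      (forall n i j, i < n -> j < n ->
          D n (fun s => size s = n /\ onth s i = onth s j))
    /\ (forall n A, D n.+1 A -> D n (fun t => exists x, A (rcons t x))).

Definition expands_ogroup (D : nat -> mset M -> Prop)
    (lt : M -> M -> Prop) (add : M -> M -> M) : Prop :=
  [/\ D 2 (fun s => exists x y, s = [:: x; y] /\ lt x y),
      D 3 (fun s => exists x y, s = [:: x; y; add x y])
    & (forall a, D 1 (fun s => s = [:: a]))].

Definition locally_o_minimal (D : nat -> mset M -> Prop)
    (lt : M -> M -> Prop) : Prop :=
  forall (Y : mset M) (a : M), D 1 Y ->
    exists b c, lt b a /\ lt a c /\
      exists (ps : seq M) (ivs : seq (M * M)),
        forall x, lt b x -> lt x c ->
          (Y [:: x] <-> (List.In x ps \/
                         exists uv, List.In uv ivs /\ lt uv.1 x /\ lt x uv.2)).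

Inductive ext := EFin of M | EPInf | ENInf.

Definition ext_le (lt : M -> M -> Prop) (u v : ext) : Prop :=
  match u, v with
  | ENInf, _ => True
  | _, EPInf => True
  | EFin x, EFin y => lt x y \/ x = y
  | _, _ => False
  end.

Definition is_sup (lt : M -> M -> Prop) (Y : mset M) (s : ext) : Prop :=
  (forall y, Y [:: y] -> ext_le lt (EFin y) s) /\
  (forall t, (forall y, Y [:: y] -> ext_le lt (EFin y) t) -> ext_le lt s t).

Definition is_inf (lt : M -> M -> Prop) (Y : mset M) (s : ext) : Prop :=
  (forall y, Y [:: y] -> ext_le lt s (EFin y)) /\
  (forall t, (forall y, Y [:: y] -> ext_le lt t (EFin y)) -> ext_le lt t s).

Definition definably_complete (D : nat -> mset M -> Prop)
    (lt : M -> M -> Prop) : Prop :=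
  forall Y, D 1 Y -> (exists s, is_sup lt Y s) /\ (exists s, is_inf lt Y s).

Definition dc_lomin_expansion (lt : M -> M -> Prop) (add : M -> M -> M)
    (zero : M) (D : nat -> mset M -> Prop) : Prop :=
  [/\ is_ordered_group lt add zero, dense_no_endpoints lt, is_structure D,
      expands_ogroup D lt add
    & locally_o_minimal D lt /\ definably_complete D lt].

(* Definable topological spaces: a definable set X in M^dim with a
   definable family {B_y : y in M^pdim} (B_y = {x | y ++ x in base})
   which is an open base of the topology.                              *)
Record dtop (D : nat -> mset M -> Prop) := DTop {
  dt_dim : nat;
  dt_set : mset M;
  dt_pdim : nat;
  dt_base : mset M;
  dt_set_def : D dt_dim dt_set;
  dt_base_def : D (dt_pdim + dt_dim) dt_base;
  dt_base_sub : forall y x, size y = dt_pdim -> dt_base (y ++ x) -> dt_set x;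
  dt_cover : forall x, dt_set x -> exists y, size y = dt_pdim /\ dt_base (y ++ x);
  dt_inter : forall y1 y2 x, size y1 = dt_pdim -> size y2 = dt_pdim ->
      dt_base (y1 ++ x) -> dt_base (y2 ++ x) ->
      exists y3, size y3 = dt_pdim /\ dt_base (y3 ++ x) /\
        forall z, dt_base (y3 ++ z) -> dt_base (y1 ++ z) /\ dt_base (y2 ++ z)
}.

Variable D : nat -> mset M -> Prop.

Definition dopen (T : dtop D) (U : mset M) : Prop :=
  (forall x, U x -> dt_set T x) /\
  (forall x, U x -> exists y, size y = dt_pdim T /\ dt_base T (y ++ x) /\
                     forall z, dt_base T (y ++ z) -> U z).

Definition dopen2 (T1 T2 : dtop D) (W : seq M -> seq M -> Prop) : Prop :=
  (forall x1 x2, W x1 x2 -> dt_set T1 x1 /\ dt_set T2 x2) /\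
  (forall x1 x2, W x1 x2 -> exists U1 U2, dopen T1 U1 /\ dopen T2 U2 /\
       U1 x1 /\ U2 x2 /\ forall z1 z2, U1 z1 -> U2 z2 -> W z1 z2).

Definition maps_into (T S : dtop D) (f : seq M -> seq M) : Prop :=
  forall x, dt_set T x -> dt_set S (f x).

Definition definable_map (T S : dtop D) (f : seq M -> seq M) : Prop :=
  maps_into T S f /\
  D (dt_dim T + dt_dim S) (fun p => exists x, dt_set T x /\ p = x ++ f x).

Definition continuous_map (T S : dtop D) (f : seq M -> seq M) : Prop :=
  maps_into T S f /\
  forall U, dopen S U -> dopen T (fun x => dt_set T x /\ U (f x)).

Definition dcmap (T S : dtop D) (f : seq M -> seq M) : Prop :=
  definable_map T S f /\ continuous_map T S f.

Definition maps2_into (T1 T2 S : dtop D) (f : seq M -> seq M -> seq M) : Prop :=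
  forall x1 x2, dt_set T1 x1 -> dt_set T2 x2 -> dt_set S (f x1 x2).

Definition definable_map2 (T1 T2 S : dtop D) (f : seq M -> seq M -> seq M) :=
  maps2_into T1 T2 S f /\
  D (dt_dim T1 + dt_dim T2 + dt_dim S)
    (fun p => exists x1 x2, dt_set T1 x1 /\ dt_set T2 x2 /\
                            p = x1 ++ x2 ++ f x1 x2).

Definition continuous_map2 (T1 T2 S : dtop D) (f : seq M -> seq M -> seq M) :=
  maps2_into T1 T2 S f /\
  forall U, dopen S U ->
    dopen2 T1 T2 (fun x1 x2 => dt_set T1 x1 /\ dt_set T2 x2 /\ U (f x1 x2)).

Definition dcmap2 (T1 T2 S : dtop D) (f : seq M -> seq M -> seq M) :=
  definable_map2 T1 T2 S f /\ continuous_map2 T1 T2 S f.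

Definition is_dtgroup (G : dtop D) (mul : seq M -> seq M -> seq M)
    (inv : seq M -> seq M) (e : seq M) : Prop :=
  [/\ dt_set G e,
      (forall x y z, dt_set G x -> dt_set G y -> dt_set G z ->
         mul x (mul y z) = mul (mul x y) z),
      (forall x, dt_set G x -> mul e x = x /\ mul x e = x),
      (forall x, dt_set G x -> mul x (inv x) = e /\ mul (inv x) x = e)
    & dcmap2 G G G mul /\ continuous_map G G inv].

Definition is_daction (G : dtop D) (mul : seq M -> seq M -> seq M)
    (e : seq M) (X : dtop D) (a : seq M -> seq M -> seq M) : Prop :=
  [/\ dcmap2 G X X a,
      (forall x, dt_set X x -> a e x = x)
    & (forall g h x, dt_set G g -> dt_set G h -> dt_set X x ->
         a g (a h x) = a (mul g h) x)].

Definition is_dquotient (G X : dtop D) (a : seq M -> seq M -> seq M)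
    (Q : dtop D) (pi : seq M -> seq M) : Prop :=
  [/\ dcmap X Q pi,
      (forall g x, dt_set G g -> dt_set X x -> pi (a g x) = pi x)
    & (forall (T : dtop D) (phi : seq M -> seq M), dcmap X T phi ->
         (forall g x, dt_set G g -> dt_set X x -> phi (a g x) = phi x) ->
         exists psi, dcmap Q T psi /\
           forall x, dt_set X x -> phi x = psi (pi x))].

End Defs.

From mathcomp Require Import all_boot zify.
From Stdlib Require Import FunctionalExtensionality PropExtensionality.
From Stdlib Require Import ClassicalEpsilon Classical.

(* Definable choice drives the proof.  Every nonempty definable subset of [M]
   has a canonical point, defined uniformly in parameters: its infimum if that
   is attained, and otherwise a point of the interval that local o-minimality
   provides just to the right of the infimum.  Choosing coordinate by
   coordinate, every definable family of nonempty sets in [M^n] gets a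
   definable choice function.  Choosing a point in each [G]-orbit gives a
   definable set [Q] of representatives and a definable retraction
   [pi : X -> Q] whose fibres are the orbits.  Since [G] acts by
   homeomorphisms, the images of basic open sets of [X] form a definable base
   on [Q] that makes [pi] continuous and open, and an invariant definable
   continuous map on [X] factors through [Q] as its own restriction.  When [G]
   is a normal subgroup the orbits are cosets, so [pi (x y)] only depends on
   [pi x] and [pi y], and this product makes [Q] a definable topological
   group. *)

Set Implicit Arguments.
Unset Strict Implicit.
Unset Printing Implicit Defensive.

Lemma take_drop_cat T n k (s w : seq T) :
  size s = n + k -> take k (drop n (s ++ w)) = drop n s.
Proof.
move=> szs; have szn : size (take n s) = n by rewrite size_take szs; case: ltnP; lia.
rewrite -[in LHS](cat_take_drop n s) -catA drop_size_cat // take_size_cat //.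
by rewrite size_drop szs addKn.
Qed.

Section DefinableSets.
Variables (M : Type) (D : nat -> mset M -> Prop).
Hypothesis HD : is_structure D.
Variable z0 : M.
Hypothesis D_singleton : forall m : M, D 1 (fun s => s = [:: m]).

Lemma eq_D n (A B : mset M) : (forall s, A s <-> B s) -> D n A -> D n B.
Proof.
move=> AB; suff -> : B = A by [].
apply: functional_extensionality => s; apply: propositional_extensionality.
exact: iff_sym (AB s).
Qed.

Lemma D_size n A s : D n A -> A s -> size s = n.
Proof. by case: HD => H _ DA; apply: H. Qed.

Definition definable n (P : seq M -> Prop) := D n (fun s => size s = n /\ P s).

Lemma definableD n A : D n A -> definable n A.
Proof.
move=> DA; apply: eq_D _ (DA) => s; split; last by case.
by move=> As; split => //; apply: D_size DA As.
Qed.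

Lemma D_definable n P : definable n P -> (forall s, P s -> size s = n) -> D n P.
Proof. by move=> dP Psz; apply: eq_D _ dP => s; split=> [[]|Ps] //; split => //; apply: Psz. Qed.

Lemma eq_definable n (P Q : seq M -> Prop) :
  (forall s, size s = n -> (P s <-> Q s)) -> definable n P -> definable n Q.
Proof.
by move=> PQ; apply: eq_D => s; split; case=> sz Ps; split => //; apply/(PQ _ sz).
Qed.

Lemma definableT n : definable n (fun _ => True).
Proof. by case: HD => _ [H _]; apply: eq_D _ (H n) => s; split; [|case]. Qed.

Lemma definableU n P Q : definable n P -> definable n Q -> definable n (fun s => P s \/ Q s).
Proof.
case: HD => _ [_ [H _]] dP dQ; apply: eq_D _ (H _ _ _ dP dQ) => s.
by split; [case=> [][]; auto | case=> sz [] ?; auto].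
Qed.

Lemma definableC n P : definable n P -> definable n (fun s => ~ P s).
Proof.
case: HD => _ [_ [_ [H _]]] dP; apply: eq_D _ (H _ _ dP) => s.
by split; case=> sz nP; split => //; [move=> Ps; apply: nP | case].
Qed.

Lemma definableI n P Q : definable n P -> definable n Q -> definable n (fun s => P s /\ Q s).
Proof.
move=> dP dQ; apply: eq_definable _ (definableC (definableU (definableC dP) (definableC dQ))).
by move=> s _; split; [move/not_or_and => [/NNPP ? /NNPP ?] | case=> ?? []].
Qed.

Lemma definable_imp n P Q :
  definable n P -> definable n Q -> definable n (fun s => P s -> Q s).
Proof.
move=> dP dQ; apply: eq_definable _ (definableU (definableC dP) dQ) => s _.
by split; [case=> // ?? | move=> PQ; case: (classic (P s)); auto].
Qed.

Lemma definable_ex n P : definable n.+1 P -> definable n (fun s => exists x, P (rcons s x)).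
Proof.
case: HD => _ [_ [_ [_ [_ [_ [_ H]]]]]] dP; apply: eq_D _ (H _ _ dP) => s.
split; last by case=> sz [x Px]; exists x; rewrite size_rcons sz.
by case=> x [+ Px]; rewrite size_rcons => -[sz]; split; last exists x.
Qed.

Lemma definable_all n P : definable n.+1 P -> definable n (fun s => forall x, P (rcons s x)).
Proof.
move=> dP; apply: eq_definable _ (definableC (definable_ex (definableC dP))) => s _.
by split=> [nP x|Pall [x]]; [apply: NNPP => nPx; apply: nP; exists x | apply].
Qed.

Lemma definable_exs n k P :
  definable (n + k) P -> definable n (fun s => exists w, size w = k /\ P (s ++ w)).
Proof.
elim: k n P => [|k IH] n P.
  rewrite addn0; apply: eq_definable => s _; split=> [Ps|[w [/size0nil ->]]].
    by exists [::]; rewrite cats0.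
  by rewrite cats0.
rewrite addnS => /definable_ex /IH; apply: eq_definable => s _; split.
  by case=> w [sw [x Px]]; exists (rcons w x); rewrite size_rcons sw -rcons_cat.
case=> w []; case/lastP: w => [//|w x]; rewrite size_rcons => -[sw] Px.
by exists w; split => //; exists x; rewrite rcons_cat.
Qed.

Lemma definable_drop m k P : definable m P -> definable (k + m) (fun s => P (drop k s)).
Proof.
elim: k => [|k IH] dP; first by apply: eq_definable _ dP => s _; rewrite drop0.
case: HD => _ [_ [_ [_ [H _]]]]; apply: eq_D _ (H _ _ (IH dP)) => s; split.
  by case=> x [t [-> [sz Pt]]]; rewrite /= sz.
by case: s => [|x t] [//= [sz] Pt]; exists x, t.
Qed.

Lemma definable_take m k P : definable m P -> definable (m + k) (fun s => P (take m s)).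
Proof.
elim: k => [|k IH] dP.
  by rewrite addn0; apply: eq_definable _ dP => s <-; rewrite take_size.
case: HD => _ [_ [_ [_ [_ [H _]]]]]; rewrite addnS; apply: eq_D _ (H _ _ (IH dP)) => s.
split.
  case=> t [x [-> [sz Pt]]]; rewrite size_rcons sz -cats1 takel_cat //.
  by rewrite sz leq_addr.
case/lastP: s => [[]//|t x]; rewrite size_rcons -cats1 => -[[sz]].
by rewrite takel_cat ?sz ?leq_addr // => Pt; exists t, x; rewrite cats1.
Qed.

Lemma definable_nth_eq n i j :
  i < n -> j < n -> definable n (fun s => nth z0 s i = nth z0 s j).
Proof.
case: HD => _ [_ [_ [_ [_ [_ [H _]]]]]] ltin ltjn.
apply: eq_D _ (H _ _ _ ltin ltjn) => s; split; case=> sz E; split => //.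
  by rewrite -!odflt_onth E.
by rewrite !onthE !(nth_map z0) ?sz // E.
Qed.

Lemma definable_nth_cst n i c : i < n -> definable n (fun s => nth z0 s i = c).
Proof.
move=> ltin; have d1 : definable 1 (fun s => nth z0 s 0 = c).
  apply: eq_D _ (D_singleton c) => s; split=> [->|] //.
  by case: s => [|x [|y t]] [] //= _ ->.
have := definable_take (n - i.+1) (definable_drop i d1).
rewrite addn1 subnKC //; apply: eq_definable => s _.
by rewrite nth_drop addn0 nth_take.
Qed.

Lemma definable_big_and m K (P : nat -> seq M -> Prop) :
  (forall j, j < K -> definable m (P j)) ->
  definable m (fun s => forall j, j < K -> P j s).
Proof.
elim: K => [|K IH] dP; first by apply: eq_definable _ (definableT m).
have := definableI (IH (fun j ltjK => dP j (ltnW ltjK))) (dP K (ltnSn K)).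
apply: eq_definable => s _; split=> [[Pl PK] j|Pall]; last first.
  by split=> [j ltjK|]; apply: Pall => //; apply: ltnW.
by rewrite ltnS leq_eqVlt => /orP[/eqP ->|/Pl].
Qed.

Definition arg_val (s : seq M) (a : nat + M) : M :=
  match a with inl i => nth z0 s i | inr c => c end.

Definition arg_ok n (a : nat + M) : bool := if a is inl i then i < n else true.

Lemma arg_val_cat s w a : arg_ok (size s) a -> arg_val (s ++ w) a = arg_val s a.
Proof. by case: a => //= i lti; rewrite nth_cat lti. Qed.

Lemma definable_subst n k (R : seq M -> Prop) (args : seq (nat + M)) :
  definable k R -> size args = k -> all (arg_ok n) args ->
  definable n (fun s => R (map (arg_val s) args)).
Proof.
(* [R (map (arg_val s) args)] holds iff some [w] with [R w] agrees entrywise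
   with the arguments evaluated at [s]. *)
move=> dR szargs argsok.
have okj j : j < k -> arg_ok n (nth (inl 0) args j).
  by move=> ltjk; apply: (all_nthP _ argsok); rewrite szargs.
pose P s := R (drop n s) /\
  forall j, j < k -> nth z0 s (n + j) = arg_val s (nth (inl 0) args j).
have dP : definable (n + k) P.
  apply: definableI; first exact: definable_drop.
  apply: definable_big_and => j ltjk; move: (okj j ltjk).
  case: (nth _ _ _) => [i|c] /= okij.
    by apply: definable_nth_eq; rewrite ?ltn_add2l //; apply: ltn_addr.
  by apply: definable_nth_cst; rewrite ltn_add2l.
apply: eq_definable _ (definable_exs dP) => s szs.
have valE w j : j < k -> arg_val (s ++ w) (nth (inl 0) args j) = arg_val s (nth (inl 0) args j).
  by move=> ltjk; apply: arg_val_cat; rewrite szs okj.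
have nthE w j : nth z0 (s ++ w) (n + j) = nth z0 w j.
  by rewrite nth_cat szs ltnNge leq_addr /= addKn.
split.
  case=> w [szw [+ Ew]]; rewrite drop_size_cat //.
  suff -> : map (arg_val s) args = w by [].
  apply: (@eq_from_nth _ z0); first by rewrite size_map szargs szw.
  move=> j; rewrite size_map szargs => ltjk.
  by rewrite (nth_map (inl 0)) ?szargs // -(valE w) // -nthE Ew.
move=> Rs; exists (map (arg_val s) args); split; first by rewrite size_map.
split=> [|j ltjk]; first by rewrite drop_size_cat.
by rewrite nthE valE // (nth_map (inl 0)) ?szargs.
Qed.

Lemma definable_blocks n i l j m P :
  definable (l + m) P -> i + l <= n -> j + m <= n ->
  definable n (fun s => P (take l (drop i s) ++ take m (drop j s))).
Proof.
move=> dP lein lejn.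
pose args := map inl (iota i l ++ iota j m) : seq (nat + M).
have okargs : all (arg_ok n) args.
  by rewrite all_map all_cat; apply/andP; split; apply/allP => x;
    rewrite mem_iota /= => /andP[_]; lia.
have := definable_subst dP (args := args) _ okargs.
rewrite size_map size_cat !size_iota => /(_ erefl).
apply: eq_definable => s szs.
by rewrite /args -map_comp map_cat !(map_nth_iota z0) // szs; lia.
Qed.

Lemma definable_exs_first n k P :
  definable (k + n) P -> definable n (fun s => exists w, size w = k /\ P (w ++ s)).
Proof.
move=> dP; have := definable_exs (definable_blocks (n := n + k) (i := n) (j := 0) dP _ _).
move=> /(_ (leqnn _) (leq_addr _ _)); apply: eq_definable => s szs.
by split; case=> w [szw Pw]; exists w; split => //; move: Pw;
  rewrite drop_size_cat // drop0 take_size_cat // take_oversize ?szw.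
Qed.

Definition definable2 n m (R : seq M -> seq M -> Prop) :=
  definable (n + m) (fun s => R (take n s) (drop n s)).

Lemma definable2_cat n m P :
  definable (n + m) P -> definable2 n m (fun x y => P (x ++ y)).
Proof. by apply: eq_definable => s _; rewrite cat_take_drop. Qed.

Lemma definable2_fst n m P : definable n P -> definable2 n m (fun x _ => P x).
Proof. exact: definable_take. Qed.

Lemma definable2I n m R S : definable2 n m R -> definable2 n m S ->
  definable2 n m (fun x y => R x y /\ S x y).
Proof. exact: definableI. Qed.

Lemma definable2_exl n m R :
  definable2 n m R -> definable m (fun y => exists x, size x = n /\ R x y).
Proof.
move/definable_exs_first; apply: eq_definable => s szs.
by split; case=> x [szx Rx]; exists x; move: Rx; rewrite take_size_cat ?drop_size_cat.
Qed.

Lemma definable2_exl_prefix k n m R : definable2 (k + n) m R ->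
  definable2 n m (fun x y => exists g, size g = k /\ R (g ++ x) y).
Proof.
rewrite /definable2 -addnA => /definable_exs_first; apply: eq_definable => s szs.
by split; case=> g [szg Rg]; exists g; move: Rg;
  rewrite takeD take_size_cat // [k + n]addnC -drop_drop !(drop_size_cat _ szg).
Qed.

Lemma definable2_comp n m k R S : definable2 n m R -> definable2 m k S ->
  definable2 n k (fun x z => exists y, size y = m /\ R x y /\ S y z).
Proof.
(* Lay the blocks out as [x ++ z ++ y] and project [y] away. *)
move=> dR dS.
have dRS : definable (n + k + m)
    (fun s => R (take n s) (drop (n + k) s) /\ S (drop (n + k) s) (take k (drop n s))).
  apply: definableI.
    apply: eq_definable _ (definable_blocks (i := 0) (j := n + k) dR _ _); try lia.
    move=> s szs; have szn : size (take n s) = n by rewrite size_take szs; case: ltnP; lia.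
    have szm : size (drop (n + k) s) = m by rewrite size_drop szs; lia.
    by rewrite drop0 take_size_cat // drop_size_cat // [take m _]take_oversize ?szm.
  apply: eq_definable _ (definable_blocks (i := n + k) (j := n) dS _ _); try lia.
  move=> s szs; have szm : size (drop (n + k) s) = m by rewrite size_drop szs; lia.
  have szk : size (take k (drop n s)) = k by rewrite size_take size_drop szs; case: ltnP; lia.
  by rewrite [take m (drop _ _)]take_oversize ?szm // take_size_cat // drop_size_cat.
apply: eq_definable _ (definable_exs dRS) => s szs.
have szn : size (take n s) = n by rewrite size_take szs; case: ltnP; lia.
by split; case=> y [szy RSy]; exists y; split => //; move: RSy;
  rewrite take_drop_cat // takel_cat ?szs ?leq_addr // drop_size_cat.
Qed.

(* First-order formulas over the structure, with an extra unary predicate [FY]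
   that is interpreted by a member of a definable family. *)
Inductive formula :=
| FRel k (R : seq M -> Prop) of definable k R & seq (nat + M)
| FY of nat + M
| FNot of formula
| FAnd of formula & formula
| FOr of formula & formula
| FImp of formula & formula
| FEx of formula
| FAll of formula.

Fixpoint sem (Y : M -> Prop) (s : seq M) (f : formula) : Prop :=
  match f with
  | FRel _ R _ args => R (map (arg_val s) args)
  | FY a => Y (arg_val s a)
  | FNot f => ~ sem Y s f
  | FAnd f g => sem Y s f /\ sem Y s g
  | FOr f g => sem Y s f \/ sem Y s g
  | FImp f g => sem Y s f -> sem Y s g
  | FEx f => exists x, sem Y (rcons s x) f
  | FAll f => forall x, sem Y (rcons s x) f
  end.

Fixpoint wf (n : nat) (f : formula) : bool :=
  match f with
  | FRel k _ _ args => (size args == k) && all (arg_ok n) args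
  | FY a => arg_ok n a
  | FNot f => wf n f
  | FAnd f g | FOr f g | FImp f g => wf n f && wf n g
  | FEx f | FAll f => wf n.+1 f
  end.

Definition shift_arg k (a : nat + M) : nat + M :=
  if a is inl i then inl (k + i) else a.

Fixpoint shift (k : nat) (f : formula) : formula :=
  match f with
  | FRel _ _ dR args => FRel dR (map (shift_arg k) args)
  | FY a => FY (shift_arg k a)
  | FNot f => FNot (shift k f)
  | FAnd f g => FAnd (shift k f) (shift k g)
  | FOr f g => FOr (shift k f) (shift k g)
  | FImp f g => FImp (shift k f) (shift k g)
  | FEx f => FEx (shift k f)
  | FAll f => FAll (shift k f)
  end.

Lemma arg_val_shift p s a : arg_val (p ++ s) (shift_arg (size p) a) = arg_val s a.
Proof. by case: a => //= i; rewrite nth_cat ltnNge leq_addr /= addKn. Qed.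

Lemma sem_shift Y f p s : sem Y (p ++ s) (shift (size p) f) <-> sem Y s f.
Proof.
elim: f s => [k R dR args|a|f IH|f IHf g IHg|f IHf g IHg|f IHf g IHg|f IH|f IH] s /=.
- by rewrite -map_comp (eq_map (arg_val_shift p s)).
- by rewrite arg_val_shift.
- by rewrite IH.
- by rewrite IHf IHg.
- by rewrite IHf IHg.
- by rewrite IHf IHg.
- by split; case=> x fx; exists x; move: fx; rewrite rcons_cat IH.
- by split=> + x => /(_ x); rewrite rcons_cat IH.
Qed.

Lemma arg_ok_shift n k a : arg_ok n a -> arg_ok (k + n) (shift_arg k a).
Proof. by case: a => //= i; rewrite ltn_add2l. Qed.

Lemma wf_shift k f n : wf n f -> wf (k + n) (shift k f).
Proof.
elim: f n => [k' R dR args|a|f IH|f IHf g IHg|f IHf g IHg|f IHf g IHg|f IH|f IH] n /=.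
- case/andP => /eqP <- argsok; rewrite size_map eqxx /= all_map.
  by elim: args argsok => //= b args IH /andP[/arg_ok_shift -> /IH].
- exact: arg_ok_shift.
- exact: IH.
- by case/andP => /IHf -> /IHg ->.
- by case/andP => /IHf -> /IHg ->.
- by case/andP => /IHf -> /IHg ->.
- by move/IH; rewrite addnS.
- by move/IH; rewrite addnS.
Qed.

(* The first [k] variables of a formula act as the parameters selecting the
   member of the family [A] that interprets [FY]. *)
Theorem definable_sem k (A : seq M -> Prop) f n : definable k.+1 A -> k <= n -> wf n f ->
  definable n (fun s => sem (fun y => A (take k s ++ [:: y])) s f).
Proof.
move=> dA; elim: f n => [k' R dR args|a|f IH|f IHf g IHg|f IHf g IHg|f IHf g IHg|f IH|f IH] n
  lekn /=.
- by case/andP => /eqP szargs argsok; apply: definable_subst dR szargs argsok.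
- move=> aok.
  have szargs : size (map inl (iota 0 k) ++ [:: a]) = k.+1.
    by rewrite size_cat size_map size_iota addn1.
  have argsok : all (arg_ok n) (map inl (iota 0 k) ++ [:: a]).
    rewrite all_cat /= aok !andbT all_map; apply/allP => i.
    by rewrite mem_iota /= => ltik; lia.
  apply: eq_definable _ (definable_subst dA szargs argsok) => s szs.
  by rewrite map_cat -map_comp /= (map_nth_iota0 z0) // szs.
- by move/(IH n lekn)/definableC.
- by case/andP => /(IHf n lekn) dF /(IHg n lekn) /(definableI dF).
- by case/andP => /(IHf n lekn) dF /(IHg n lekn) /(definableU dF).
- by case/andP => /(IHf n lekn) dF /(IHg n lekn) /(definable_imp dF).
- move=> /(IH n.+1 (leqW lekn)) /definable_ex; apply: eq_definable => s szs.
  by split; case=> x fx; exists x; move: fx; rewrite -cats1 takel_cat ?szs.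
- move=> /(IH n.+1 (leqW lekn)) /definable_all; apply: eq_definable => s szs.
  by split=> + x => /(_ x); rewrite -cats1 takel_cat ?szs.
Qed.

End DefinableSets.

Section OrderedGroup.
Variables (M : Type) (lt : M -> M -> Prop) (add : M -> M -> M) (zero : M).
Hypothesis Hog : is_ordered_group lt add zero.

Definition le x y := lt x y \/ x = y.

Lemma addA x y z : add x (add y z) = add (add x y) z.
Proof. by case: Hog. Qed.
Lemma add0x x : add zero x = x. Proof. by case: Hog => _ /(_ x) []. Qed.
Lemma addx0 x : add x zero = x. Proof. by case: Hog => _ /(_ x) []. Qed.
Lemma ltxx x : ~ lt x x. Proof. by case: Hog => _ _ _ [H _] _; apply: H. Qed.
Lemma lt_trans x y z : lt x y -> lt y z -> lt x z.
Proof. by case: Hog => _ _ _ [_ [H _]] _; apply: H. Qed.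
Lemma lt_total x y : lt x y \/ x = y \/ lt y x.
Proof. by case: Hog => _ _ _ [_ [_ H]] _. Qed.
Lemma ltD2l z x y : lt x y -> lt (add z x) (add z y).
Proof. by case: Hog => _ _ _ _ H /(H _ _ z) []. Qed.
Lemma ltD2r z x y : lt x y -> lt (add x z) (add y z).
Proof. by case: Hog => _ _ _ _ H /(H _ _ z) []. Qed.

Definition opp x := epsilon (inhabits zero) (fun y => add x y = zero /\ add y x = zero).

Lemma oppP x : add x (opp x) = zero /\ add (opp x) x = zero.
Proof.
apply: (epsilon_spec (inhabits zero) (fun y => add x y = zero /\ add y x = zero)).
by case: Hog => _ _ H _ _; apply: H.
Qed.
Lemma addxN x : add x (opp x) = zero. Proof. by case: (oppP x). Qed.
Lemma addNx x : add (opp x) x = zero. Proof. by case: (oppP x). Qed.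
Lemma addKx z x : add (opp z) (add z x) = x. Proof. by rewrite addA addNx add0x. Qed.
Lemma addNKx z x : add z (add (opp z) x) = x. Proof. by rewrite addA addxN add0x. Qed.
Lemma addxI z x y : add z x = add z y -> x = y.
Proof. by move=> E; rewrite -(addKx z x) E addKx. Qed.
Lemma addIx z x y : add x z = add y z -> x = y.
Proof.
by move=> E; rewrite -[x]addx0 -[y]addx0 -(addxN z) !addA E.
Qed.
Lemma opp_uniq x y : add x y = zero -> y = opp x.
Proof. by move=> E; apply: (@addxI x); rewrite E addxN. Qed.
Lemma opp_uniqL x y : add y x = zero -> y = opp x.
Proof. by move=> E; apply: (@addIx x); rewrite E addNx. Qed.
Lemma ltD2lI z x y : lt (add z x) (add z y) -> lt x y.
Proof. by move/(ltD2l (opp z)); rewrite !addKx. Qed.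
Lemma opp_lt0 x : lt zero x -> lt (opp x) zero.
Proof. by move=> x_gt0; apply: (@ltD2lI x); rewrite addxN addx0. Qed.

Lemma ltW x y : lt x y -> le x y. Proof. by left. Qed.
Lemma le_lt_trans x y z : le x y -> lt y z -> lt x z.
Proof. by case=> [lexy|->] // /(lt_trans lexy). Qed.
Lemma lt_le_trans x y z : lt x y -> le y z -> lt x z.
Proof. by move=> ltxy [/(lt_trans ltxy)|<-]. Qed.
Lemma le_trans x y z : le x y -> le y z -> le x z.
Proof. by case=> [ltxy|->] // leyz; left; apply: lt_le_trans leyz. Qed.
Lemma le_anti x y : le x y -> le y x -> x = y.
Proof. by case=> [ltxy|->] // [/(lt_trans ltxy)/ltxx|->]. Qed.
Lemma not_ltP x y : ~ lt x y -> le y x.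
Proof. by case: (lt_total x y) => [?|[->|?]] nlt; [case: nlt | right | left]. Qed.
Lemma not_leP x y : ~ le y x -> lt x y.
Proof. by move=> nle; apply: NNPP => /not_ltP. Qed.
Lemma lt_nle x y : lt x y -> ~ le y x.
Proof. by move=> ltxy /(lt_le_trans ltxy)/ltxx. Qed.
Lemma leD2l z x y : le x y -> le (add z x) (add z y).
Proof. by case=> [/(ltD2l z)|->]; [left | right]. Qed.
Lemma leD2r z x y : le x y -> le (add x z) (add y z).
Proof. by case=> [/(ltD2r z)|->]; [left | right]. Qed.

Lemma finite_min_above (L : seq M) t c : lt t c ->
  exists w, [/\ lt t w, le w c & forall p, List.In p L -> lt t p -> le w p].
Proof.
move=> ltc; elim: L => [|p L [w [ltw lewc wL]]]; first by exists c; split=> //; right.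
case: (classic (lt t p /\ lt p w)) => [[ltp ltpw]|np].
  exists p; split=> //; first exact: le_trans (ltW ltpw) lewc.
  by move=> q [<- _|/wL Lq /Lq]; [right | apply: le_trans (ltW ltpw)].
by exists w; split=> // q [<- ltq|/wL //]; apply: not_ltP => ltqw; exact: np.
Qed.

Section DefinableChoice.
Variable D : nat -> mset M -> Prop.
Hypotheses (Hdense : dense_no_endpoints lt) (HD : is_structure D)
  (Hexp : expands_ogroup D lt add) (Hlomin : locally_o_minimal D lt)
  (Hdc : definably_complete D lt).

Let D_singleton m : D 1 (fun s => s = [:: m]). Proof. by case: Hexp. Qed.

Local Notation definable := (definable D).
Local Notation definable2 := (definable2 D).
Local Notation formula := (formula D).
Local Notation sem := (sem zero).
Local Notation v i := (@inl nat M i).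
Local Notation cst m := (@inr nat M m).

Lemma definable_lt : definable 2 (fun s => lt (nth zero s 0) (nth zero s 1)).
Proof.
case: Hexp => Dlt _ _; apply: eq_definable _ (definableD HD Dlt) => s szs.
by split=> [[x [y [-> ltxy]]] //|]; case: s szs => [|x [|y []]] //= _ ltxy; exists x, y.
Qed.

Lemma definable_add :
  definable 3 (fun s => nth zero s 2 = add (nth zero s 0) (nth zero s 1)).
Proof.
case: Hexp => _ Dadd _; apply: eq_definable _ (definableD HD Dadd) => s szs.
by split=> [[x [y ->]] //|]; case: s szs => [|x [|y [|w []]]] //= _ ->; exists x, y.
Qed.

Definition Lt a b : formula := FRel definable_lt [:: a; b].
Definition Eq a b : formula := FRel (definable_nth_eq HD zero (ltn0Sn 1) (ltnSn 1)) [:: a; b].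
Definition Le a b : formula := FOr (Lt a b) (Eq a b).
(* [Add a b c] says [c = a + b]. *)
Definition Add a b c : formula := FRel definable_add [:: a; b; c].

(* An arbitrary positive element; capping the intervals [covers_right] at
   [t + pos0] makes their supremum exist in [M]. *)
Definition pos0 : M := epsilon (inhabits zero) (lt zero).

Definition is_glb (Z : M -> Prop) t :=
  (forall y, Z y -> le t y) /\ (forall u, (forall y, Z y -> le u y) -> le u t).
Definition is_lub (S : M -> Prop) t :=
  (forall y, S y -> le y t) /\ (forall u, (forall y, S y -> le y u) -> le t u).
Definition covers_right (Z : M -> Prop) t tc u :=
  lt t u /\ le u tc /\ (forall x, lt t x -> lt x u -> Z x).
Definition halves d e := lt zero e /\ exists s, s = add e e /\ le s d.

(* The point chosen in a set [Z] bounded below: its infimum [t] if [t] is in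
   [Z]; otherwise [Z] contains an interval [(t, r)], and we take [t + e] with
   [e] the supremum of the [e > 0] with [e + e <= r - t], since [M] need not be
   divisible.  Intermediate values ([tc = t + pos0], [nt = - t], [d = r - t])
   are existentially named, here and in [halves], because formulas have no
   function terms. *)
Definition inf_choice (Z : M -> Prop) j :=
  exists t, is_glb Z t /\ ((Z t /\ j = t) \/ (~ Z t /\ exists tc r,
    tc = add t pos0 /\ (is_lub (covers_right Z t tc) r /\ exists nt d e,
      zero = add t nt /\ (d = add nt r /\ (is_lub (halves d) e /\ j = add t e))))).

(* Sets meeting [[0, +oo)] are bounded below there; the others are mirrored. *)
Definition choice_spec (Y : M -> Prop) z :=
  ((exists y, Y y /\ le zero y) /\ inf_choice (fun y => Y y /\ le zero y) z) \/
  (~ (exists y, Y y /\ le zero y) /\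
     exists nz, zero = add z nz /\ inf_choice (fun w => exists x, zero = add w x /\ Y x) nz).

(* Formula templates mirroring the definitions above: [Zf i d] is the set [Z]
   evaluated at variable [i], with [d] the first free de Bruijn level. *)
Definition IsGlbF (Zf : nat -> nat -> formula) t d : formula :=
  FAnd (FAll (FImp (Zf d d.+1) (Le t (v d))))
       (FAll (FImp (FAll (FImp (Zf d.+1 d.+2) (Le (v d) (v d.+1)))) (Le (v d) t))).
Definition IsLubF (Sf : nat -> nat -> formula) t d : formula :=
  FAnd (FAll (FImp (Sf d d.+1) (Le (v d) t)))
       (FAll (FImp (FAll (FImp (Sf d.+1 d.+2) (Le (v d.+1) (v d)))) (Le t (v d)))).
Definition CoversRightF (Zf : nat -> nat -> formula) t tc i d : formula :=
  FAnd (Lt t (v i)) (FAnd (Le (v i) tc)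
    (FAll (FImp (Lt t (v d)) (FImp (Lt (v d) (v i)) (Zf d d.+1))))).
Definition HalvesF dv i d : formula :=
  FAnd (Lt (cst zero) (v i)) (FEx (FAnd (Add (v i) (v i) (v d)) (Le (v d) dv))).
Definition InfChoiceF (Zf : nat -> nat -> formula) j d : formula :=
  FEx (FAnd (IsGlbF Zf (v d) d.+1)
   (FOr (FAnd (Zf d d.+1) (Eq j (v d)))
        (FAnd (FNot (Zf d d.+1))
          (FEx (FEx (FAnd (Add (v d) (cst pos0) (v d.+1))
            (FAnd (IsLubF (CoversRightF Zf (v d) (v d.+1)) (v d.+2) d.+3)
              (FEx (FEx (FEx (FAnd (Add (v d) (v d.+3) (cst zero))
                 (FAnd (Add (v d.+3) (v d.+2) (v d.+4))
                   (FAnd (IsLubF (HalvesF (v d.+4)) (v (d + 5)) (d + 6))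
                         (Add (v d) (v (d + 5)) j)))))))))))))).
Definition NonnegF (i _ : nat) : formula := FAnd (FY D (v i)) (Le (cst zero) (v i)).
Definition OppF (i d : nat) : formula :=
  FEx (FAnd (Add (v i) (v d) (cst zero)) (FY D (v d))).
Definition ChoiceSpecF : formula :=
  FOr (FAnd (FEx (NonnegF 1 2)) (InfChoiceF NonnegF (v 0) 1))
      (FAnd (FNot (FEx (NonnegF 1 2)))
            (FEx (FAnd (Add (v 0) (v 1) (cst zero)) (InfChoiceF OppF (v 1) 2)))).

Lemma pos0_gt0 : lt zero pos0.
Proof.
apply: (epsilon_spec (inhabits zero) (lt zero)).
by case: Hdense => _ /(_ zero) [_ [w [_ ltw]]]; exists w.
Qed.

Lemma is_glb_uniq Z t t' : is_glb Z t -> is_glb Z t' -> t = t'.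
Proof. by case=> lbt glbt [lbt' glbt']; apply: le_anti; [apply: glbt' | apply: glbt]. Qed.
Lemma is_lub_uniq Z t t' : is_lub Z t -> is_lub Z t' -> t = t'.
Proof. by case=> ubt lubt [ubt' lubt']; apply: le_anti; [apply: lubt | apply: lubt']. Qed.

Definition definable1 (Y : M -> Prop) := definable 1 (fun s => Y (nth zero s 0)).

Lemma eq_definable1 (P Q : M -> Prop) :
  (forall y, P y <-> Q y) -> definable1 P -> definable1 Q.
Proof. by move=> PQ; apply: eq_definable => s _. Qed.

Lemma definable1_sem (Z : M -> Prop) (f : formula) :
  definable1 Z -> wf 1 f -> definable1 (fun y => sem Z [:: y] f).
Proof.
move=> dZ wff; have := definable_sem HD zero D_singleton dZ (leq0n 1) wff.
by apply: eq_definable => -[|y []].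
Qed.

Lemma definable1_fiber k A p :
  definable k.+1 A -> size p = k -> definable1 (fun y => A (p ++ [:: y])).
Proof.
move=> dA szp.
have szargs : size (map inr p ++ [:: v 0]) = k.+1 by rewrite size_cat size_map szp addn1.
have argsok : all (arg_ok 1) (map inr p ++ [:: v 0]).
  by rewrite all_cat all_map andbT; elim: p {szp szargs}.
apply: eq_definable _ (definable_subst HD zero D_singleton dA szargs argsok) => s _.
by rewrite map_cat -map_comp /= map_id.
Qed.

Lemma lub_exists S : definable1 S -> (exists y, S y) ->
  (exists b, forall y, S y -> le y b) -> exists r, is_lub S r.
Proof.
move=> dS [y Sy] [b Sb]; case: (Hdc dS) => -[[r||] [ub lub]] _.
- exists r; split=> [x Sx|u Su]; first exact: ub.
  by apply: (lub (EFin u)) => x [_ /Su].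
- by case: (lub (EFin b)) => x [_ /Sb].
- by case: (ub y (conj erefl Sy)).
Qed.

Lemma glb_exists S : definable1 S -> (exists y, S y) ->
  (exists b, forall y, S y -> le b y) -> exists r, is_glb S r.
Proof.
move=> dS [y Sy] [b Sb]; case: (Hdc dS) => _ [[r||] [lb glb]].
- exists r; split=> [x Sx|u Su]; first exact: lb.
  by apply: (glb (EFin u)) => x [_ /Su].
- by case: (lb y (conj erefl Sy)).
- by case: (glb (EFin b)) => x [_ /Sb].
Qed.

(* Near [t], [Z] is a finite union of points and intervals.  Below all their
   endpoints above [t] there are points of [Z] (as [t = inf Z]), so these lie
   in an interval of [Z] starting at or before [t]. *)
Lemma glb_right_interval Z t : definable1 Z -> is_glb Z t -> ~ Z t ->
  exists u, lt t u /\ forall x, lt t x -> lt x u -> Z x.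
Proof.
move=> dZ [lbt glbt] nZt.
have [b [c [ltbt [ltc [ps [ivs Zloc]]]]]] := Hlomin t dZ.
have [w [ltw lewc wmin]] := finite_min_above (ps ++ map fst ivs) ltc.
have [z [Zz ltzw]] : exists z, Z z /\ lt z w.
  apply: NNPP => nZ; apply: (lt_nle ltw); apply: glbt => y Zy.
  by apply: not_ltP => ltyw; apply: nZ; exists y.
have ltz : lt t z by case: (lbt _ Zz) => // tz; rewrite tz in nZt.
have ltbz := lt_trans ltbt ltz; have ltzc := lt_le_trans ltzw lewc.
case: ((Zloc z ltbz ltzc).1 (conj erefl Zz)) => [psz|[uv [ivs_uv [ltuz ltzv]]]].
  by case: (lt_nle ltzw (wmin z (List.in_or_app _ _ _ (or_introl psz)) ltz)).
have leut : le uv.1 t.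
  apply: not_ltP => ltu; have ivs_u : List.In uv.1 (ps ++ map fst ivs).
    by apply: List.in_or_app; right; apply: List.in_map.
  exact: ltxx (lt_trans (lt_le_trans ltzw (wmin _ ivs_u ltu)) ltuz).
exists z; split=> // x ltx ltxz.
have := (Zloc x (lt_trans ltbt ltx) (lt_trans ltxz ltzc)).2; case=> [|_ //].
by right; exists uv; split=> //; split; [apply: le_lt_trans leut ltx | apply: lt_trans ltxz ltzv].
Qed.

Lemma half_exists d : lt zero d -> exists e, lt zero e /\ le (add e e) d.
Proof.
move=> d_gt0; have [e [e_gt0 lted]] := proj1 Hdense _ _ d_gt0.
case: (lt_total (add e e) d) => [lt2e|[eq2e|lt2e]].
- by exists e; split=> //; left.
- by exists e; split=> //; right.
exists (add d (opp e)); split; first by rewrite -(addxN e); apply: ltD2r.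
have ltde : lt (add d (opp e)) e by move: (ltD2r (opp e) lt2e); rewrite -addA addxN addx0.
by left; move: (ltD2l (add d (opp e)) ltde); rewrite -[X in lt _ X]addA addNx addx0.
Qed.

Lemma definable1_halves d : definable1 (halves d).
Proof.
have dT : definable1 (fun _ => True) by apply: eq_definable _ (definableT HD 1).
exact: definable1_sem (HalvesF (cst d) 0 1) dT erefl.
Qed.

Lemma definable1_covers_right Z t tc : definable1 Z -> definable1 (covers_right Z t tc).
Proof.
by move=> dZ; apply: definable1_sem (CoversRightF (fun i _ => FY D (v i)) (cst t) (cst tc) 0 1)
  dZ erefl.
Qed.

Lemma halves_lub d : lt zero d ->
  (exists e, is_lub (halves d) e) /\ forall e, is_lub (halves d) e -> lt zero e /\ lt e d.
Proof.
move=> d_gt0; have [e0 [e0_gt0 le2e0]] := half_exists d_gt0.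
have halves_e0 : halves d e0 by split=> //; exists (add e0 e0).
have halves_ub x : halves d x -> le x (add d (opp e0)).
  move=> [_ [_ [-> le2x]]]; case: (lt_total x e0) => [ltx|lex].
    by left; apply: lt_le_trans ltx _; have := leD2r (opp e0) le2e0; rewrite -addA addxN addx0.
  have lee0x : le e0 x by case: lex => [->|?]; [right | left].
  by have := leD2r (opp e0) (le_trans (leD2l x lee0x) le2x); rewrite -addA addxN addx0.
have ltd : lt (add d (opp e0)) d by have := ltD2l d (opp_lt0 e0_gt0); rewrite addx0.
split; first by apply: lub_exists; [exact: definable1_halves | exists e0 | exists (add d (opp e0))].
move=> e [ub lub]; split; first exact: lt_le_trans e0_gt0 (ub _ halves_e0).
exact: le_lt_trans (lub _ halves_ub) ltd.
Qed.

Lemma covers_right_lub Z t : definable1 Z -> is_glb Z t -> ~ Z t ->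
  (exists r, is_lub (covers_right Z t (add t pos0)) r) /\
  forall r, is_lub (covers_right Z t (add t pos0)) r ->
    lt t r /\ forall x, lt t x -> lt x r -> Z x.
Proof.
move=> dZ glbt nZt; have [u [ltu Zu]] := glb_right_interval dZ glbt nZt.
have ltc : lt t (add t pos0) by have := ltD2l t pos0_gt0; rewrite addx0.
have [u' covers_u'] : exists u', covers_right Z t (add t pos0) u'.
  case: (lt_total u (add t pos0)) => [ltuc|leuc].
    by exists u; split=> //; split; [left |].
  exists (add t pos0); split=> //; split=> [|x ltx ltxc]; first by right.
  by apply: Zu ltx _; case: leuc => [->|/(lt_trans ltxc)].
split.
  apply: lub_exists; [exact: definable1_covers_right | by exists u' | exists (add t pos0)].
  by move=> y [_ []].
move=> r [ub lub]; split; first exact: lt_le_trans covers_u'.1 (ub _ covers_u').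
move=> x ltx ltxr; apply: NNPP => nZx; apply: (lt_nle ltxr); apply: lub.
by move=> y [_ [_ Zy]]; apply: not_ltP => ltxy; apply/nZx/Zy.
Qed.

Lemma inf_choiceP Z : definable1 Z -> (exists y, Z y) ->
  (exists b, forall y, Z y -> le b y) ->
  [/\ (exists j, inf_choice Z j), (forall j, inf_choice Z j -> Z j)
    & (forall j j', inf_choice Z j -> inf_choice Z j' -> j = j')].
Proof.
move=> dZ neZ lbZ; have [t glbt] := glb_exists dZ neZ lbZ.
have choice_in t' tc r nt d e : is_glb Z t' -> ~ Z t' -> tc = add t' pos0 ->
    is_lub (covers_right Z t' tc) r -> zero = add t' nt -> d = add nt r ->
    is_lub (halves d) e -> Z (add t' e).
  move=> glbt' nZt' -> lubr /esym/opp_uniq ntE dE lube; subst nt.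
  have [ltr Zint] := (covers_right_lub dZ glbt' nZt').2 r lubr.
  have d_gt0 : lt zero d by rewrite dE -(addNx t'); apply: ltD2l.
  have [e_gt0 lted] := (halves_lub d_gt0).2 e lube.
  apply: Zint; first by have := ltD2l t' e_gt0; rewrite addx0.
  by have := ltD2l t' lted; rewrite dE addNKx.
split.
- case: (classic (Z t)) => [Zt|nZt]; first by exists t, t; split=> //; left.
  have [[r lubr] /(_ r lubr) [ltr _]] := covers_right_lub dZ glbt nZt.
  have d_gt0 : lt zero (add (opp t) r) by rewrite -(addNx t); apply: ltD2l.
  have [[e lube] _] := halves_lub d_gt0.
  exists (add t e), t; split=> //; right; split=> //; exists (add t pos0), r.
  by do 2!split=> //; exists (opp t), (add (opp t) r), e; rewrite addxN.
- move=> j [t' [glbt' [[Zt' ->] //|[nZt' [tc [r [tcE [lubr [nt [d [e C]]]]]]]]]]].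
  by case: C => ntE [dE [lube ->]]; apply: choice_in glbt' nZt' tcE lubr ntE dE lube.
- move=> j j' [t1 [glb1 C1]] [t2 [glb2 C2]]; have t12 := is_glb_uniq glb1 glb2; subst t2.
  case: C1 => [[Z1 ->]|[nZ1 [tc [r [-> [lubr [nt [d [e C1]]]]]]]]];
  case: C2 => [[Z2 ->]|[nZ2 [tc' [r' [-> [lubr' [nt' [d' [e' C2]]]]]]]]] //.
  have rr' := is_lub_uniq lubr lubr'; subst r'.
  move: C1 C2 => [/esym/opp_uniq -> [-> [lube ->]]] [/esym/opp_uniq -> [-> [lube' ->]]].
  by rewrite (is_lub_uniq lube lube').
Qed.

Lemma choice_specP Y : definable1 Y -> (exists y, Y y) ->
  [/\ (exists z, choice_spec Y z), (forall z, choice_spec Y z -> Y z)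
    & (forall z z', choice_spec Y z -> choice_spec Y z' -> z = z')].
Proof.
move=> dY [y0 Yy0].
have dNonneg : definable1 (fun y => Y y /\ le zero y).
  exact: definable1_sem (NonnegF 0 1) dY erefl.
have dOpp : definable1 (fun w => exists x, zero = add w x /\ Y x).
  exact: definable1_sem (OppF 0 1) dY erefl.
case: (classic (exists y, Y y /\ le zero y)) => [neNonneg|noNonneg].
  have [[z0 Cz0] CY Cuniq] := inf_choiceP dNonneg neNonneg (ex_intro _ zero (fun y => @proj2 _ _)).
  split; first by exists z0; left.
    by move=> z [[_ /CY []]|[/(_ neNonneg)]].
  by move=> z z' [[_ Cz]|[/(_ neNonneg)]] // [[_ Cz']|[/(_ neNonneg)]] //; apply: Cuniq.
have neOpp : exists w, exists x, zero = add w x /\ Y x by exists (opp y0), y0; rewrite addNx.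
have lbOpp : exists b, forall w, (exists x, zero = add w x /\ Y x) -> le b w.
  exists zero => w [x [wx Yx]]; apply: not_ltP => ltw0.
  have ltx0 : lt x zero by apply: not_leP => lex; apply: noNonneg; exists x.
  by have := ltD2l w ltx0; rewrite addx0 -wx => lt0w; exact: ltxx (lt_trans lt0w ltw0).
have [[nz Cnz] CY Cuniq] := inf_choiceP dOpp neOpp lbOpp.
split.
- by exists (opp nz); right; split=> //; exists nz; rewrite addNx.
- move=> z [[]//|[_ [nz' [znz /CY [x [/esym/opp_uniq nzx Yx]]]]]].
  by rewrite (opp_uniqL (esym znz)) -nzx.
move=> z z' [[]//|[_ [nz1 [znz1 C1]]]] [[]//|[_ [nz2 [znz2 C2]]]].
by rewrite (opp_uniqL (esym znz1)) (opp_uniqL (esym znz2)) (Cuniq _ _ C1 C2).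
Qed.

Definition choose1 (Y : M -> Prop) : M := epsilon (inhabits zero) (choice_spec Y).

Lemma choose1P Y : definable1 Y -> (exists y, Y y) ->
  Y (choose1 Y) /\ forall z, choice_spec Y z <-> z = choose1 Y.
Proof.
move=> dY neY; have [[z Yz] specY spec_uniq] := choice_specP dY neY.
have spec_choose : choice_spec Y (choose1 Y).
  exact: (epsilon_spec (inhabits zero) (choice_spec Y) (ex_intro _ z Yz)).
by split=> [|z']; [apply: specY | split=> [/spec_uniq|->]; last by []; apply].
Qed.

Definition ChooseF : formula := FAnd (FEx (FY D (v 1))) ChoiceSpecF.

Lemma definable_choose1 k A : definable k.+1 A ->
  definable k.+1 (fun s => (exists y, A (take k s ++ [:: y])) /\
                           choose1 (fun y => A (take k s ++ [:: y])) = nth zero s k).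
Proof.
move=> dA; have wfF : wf k.+1 (shift k ChooseF) by rewrite -addn1; apply: wf_shift.
apply: eq_definable _ (definable_sem HD zero D_singleton dA (leqnSn k) wfF) => s szs.
have szp : size (take k s) = k by rewrite size_take szs ltnSn.
have -> : s = take k s ++ [:: nth zero s k].
  by rewrite cats1 -take_nth ?szs // take_oversize ?szs.
rewrite -[in X in sem _ _ (shift X _)]szp sem_shift take_size_cat // nth_cat szp ltnn subnn.
have choiceE := fun neA => proj2 (choose1P (definable1_fiber dA szp) neA) (nth zero s k).
split=> -[neA spec]; split => //; first exact/esym/(choiceE neA).
exact/(choiceE neA)/esym.
Qed.

Fixpoint choosen n (Y : seq M -> Prop) : seq M :=
  if n is n'.+1 then
    let c := choose1 (fun x => exists t, size t = n' /\ Y (x :: t)) in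
    c :: choosen n' (fun t => Y (c :: t))
  else [::].

Lemma definable1_head_fiber k n A p : definable (k + n.+1) A -> size p = k ->
  definable1 (fun x => exists t, size t = n /\ A (p ++ x :: t)).
Proof.
rewrite -addSnnS => /(definable_exs HD) /definable1_fiber dfib /dfib {}dfib.
by apply: eq_definable1 _ dfib => x; split=> -[t At]; exists t; move: At; rewrite -catA.
Qed.

Lemma choosen_cat n k A p t :
  definable (k + n) A -> size p = k -> size t = n -> A (p ++ t) ->
  A (p ++ choosen n (fun u => A (p ++ u))) /\ size (choosen n (fun u => A (p ++ u))) = n.
Proof.
elim: n k A p t => [|n IH] k A p t dA szp szt Apt.
  by move: Apt; rewrite (size0nil szt).
have dproj := definable1_head_fiber dA szp.
case: t szt Apt => [//|y t] [szt] Apt.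
have [[t' [szt' Apt']] _] := choose1P dproj (ex_intro _ y (ex_intro _ t (conj szt Apt))).
set c := choose1 _ in szt' Apt' *.
have dA' : definable (k.+1 + n) A by rewrite addSnnS.
have szpc : size (rcons p c) = k.+1 by rewrite size_rcons szp.
have := IH _ _ _ t' dA' szpc szt'; rewrite cat_rcons => /(_ Apt').
have -> : (fun t => A (rcons p c ++ t)) = (fun t => A (p ++ c :: t)).
  by apply: functional_extensionality => u; rewrite cat_rcons.
by case; rewrite cat_rcons => Ac szc; split; [exact: Ac | rewrite /= -/c szc].
Qed.

Lemma definable_choosen_cat n k A : definable (k + n) A ->
  definable2 k n (fun p y => (exists t, size t = n /\ A (p ++ t)) /\
                             y = choosen n (fun t => A (p ++ t))).
Proof.
elim: n k A => [|n IH] k A dA.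
  apply: eq_definable _ dA => s szs; rewrite addn0 in szs.
  rewrite take_oversize ?szs // drop_oversize ?szs //; split=> [As|[[t [/size0nil ->]]]].
    by split => //; exists [::]; rewrite cats0.
  by rewrite cats0.
have dA' : definable (k.+1 + n) A by rewrite addSnnS.
have dproj := definable_choose1 (definable_exs HD dA').
have := definableI HD (definable_take HD n dproj) (IH _ _ dA'); rewrite addSnnS.
apply: eq_definable => s szs.
have ltks : k < size s by rewrite szs; lia.
set p := take k s; set z := nth zero s k.
have szp : size p = k by rewrite size_take ltks.
have -> : take k.+1 s = p ++ [:: z] by rewrite (take_nth zero ltks) cats1.
rewrite take_size_cat // nth_cat szp ltnn subnn (drop_nth zero ltks) -/z.
set proj := fun x => exists t, size t = n /\ A (p ++ x :: t).
have -> : (fun y => exists t, size t = n /\ A ((p ++ [:: y]) ++ t)) = proj.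
  apply: functional_extensionality => y; apply: propositional_extensionality.
  by split=> -[t At]; exists t; move: At; rewrite -catA.
have -> : (fun t => A ((p ++ [:: z]) ++ t)) = (fun t => A (p ++ z :: t)).
  by apply: functional_extensionality => u; rewrite -catA.
have dproj' := definable1_head_fiber dA szp.
rewrite /= -/proj; split=> [[[neproj Ez] [_ ->]]|[[[|y t] [//= [szt] Apt]] [Ez ->]]].
  rewrite -Ez; split=> //; have [t [szt At]] := (choose1P dproj' neproj).1.
  by exists (choose1 proj :: t); rewrite /= szt.
have neproj : exists x, proj x by exists y, t.
have [t' [szt' At']] := (choose1P dproj' neproj).1.
by rewrite Ez; split; split => //; exists t'; rewrite -catA.
Qed.

Lemma fiber_cat k (R : seq M -> seq M -> Prop) p : size p = k ->
  (fun t => R (take k (p ++ t)) (drop k (p ++ t))) = R p.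
Proof.
by move=> szp; apply: functional_extensionality => t; rewrite take_size_cat ?drop_size_cat.
Qed.

Lemma choosenP k n R p t : definable2 k n R -> size p = k -> size t = n -> R p t ->
  R p (choosen n (R p)) /\ size (choosen n (R p)) = n.
Proof.
move=> dR szp szt Rpt; have := choosen_cat dR szp szt.
by rewrite /= (fiber_cat R szp) !take_size_cat ?drop_size_cat //; apply.
Qed.

Lemma definable_choosen k n R : definable2 k n R ->
  definable2 k n (fun p y => (exists t, size t = n /\ R p t) /\ y = choosen n (R p)).
Proof.
move/definable_choosen_cat; apply: eq_definable => s szs.
have szp : size (take k s) = k by rewrite size_take szs; case: ltnP; lia.
rewrite /= (fiber_cat R szp).
by split=> -[[t [szt Rt]] ->]; split=> //; exists t; move: Rt;
  rewrite take_size_cat ?drop_size_cat.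
Qed.

End DefinableChoice.

End OrderedGroup.

Section DefinableSpaces.
Variables (M : Type) (D : nat -> mset M -> Prop).
Hypothesis HD : is_structure D.

Lemma dt_size (T : dtop D) x : dt_set T x -> size x = dt_dim T.
Proof. by move=> Tx; exact (D_size HD (dt_set_def T) Tx). Qed.

Lemma eq_dopen (T : dtop D) (U V : mset M) :
  (forall x, U x <-> V x) -> dopen T U -> dopen T V.
Proof.
move=> UV [UT Uopen]; split=> [x /UV /UT //|x /UV /Uopen [y [szy [By ByU]]]].
by exists y; split=> //; split=> // z /ByU /UV.
Qed.

Lemma base_open (T : dtop D) y :
  size y = dt_pdim T -> dopen T (fun z => dt_base T (y ++ z)).
Proof.
move=> szy; split=> [z|z Byz]; first exact: dt_base_sub.
have [y' [szy' [By'z By'B]]] := dt_inter szy szy Byz Byz.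
by exists y'; split=> //; split=> // w /By'B [].
Qed.

Lemma definable2_graph n m (A : seq M -> Prop) (f : seq M -> seq M) :
  (forall x, A x -> size x = n /\ size (f x) = m) ->
  D (n + m) (fun s => exists x, A x /\ s = x ++ f x) <->
  definable2 D n m (fun x y => A x /\ y = f x).
Proof.
move=> szA.
have graphE s : size s = n + m ->
    (exists x, A x /\ s = x ++ f x) <-> A (take n s) /\ drop n s = f (take n s).
  move=> szs; split=> [[x [Ax ->]]|[As Es]].
    by rewrite take_size_cat ?drop_size_cat //; case: (szA x Ax).
  by exists (take n s); rewrite -Es cat_take_drop.
split=> dgraph; first exact: eq_definable graphE (definableD HD dgraph).
apply: D_definable; last by move=> s [x [/szA[szx szf] ->]]; rewrite size_cat szx szf.
by apply: eq_definable _ dgraph => s szs; apply: iff_sym; apply: graphE.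
Qed.

Lemma graph2E n (A B : seq M -> Prop) (f : seq M -> seq M -> seq M) :
  (forall x, A x -> size x = n) ->
  (fun p => exists x1 x2, A x1 /\ B x2 /\ p = x1 ++ x2 ++ f x1 x2) =
  (fun p => exists x, (A (take n x) /\ B (drop n x)) /\
                      p = x ++ f (take n x) (drop n x)).
Proof.
move=> szA; apply: functional_extensionality => p; apply: propositional_extensionality.
split=> [[x1 [x2 [Ax1 [Bx2 ->]]]]|[x [[Ax Bx] ->]]].
  exists (x1 ++ x2); rewrite take_size_cat ?drop_size_cat ?catA; auto.
by exists (take n x), (drop n x); rewrite catA cat_take_drop.
Qed.

Lemma definable_mapE (T S : dtop D) f : maps_into T S f ->
  definable_map T S f <->
  definable2 D (dt_dim T) (dt_dim S) (fun x y => dt_set T x /\ y = f x).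
Proof.
move=> Tf; have szA x : dt_set T x -> size x = dt_dim T /\ size (f x) = dt_dim S.
  by move=> Tx; rewrite (dt_size Tx) (dt_size (Tf x Tx)).
by split=> [[_ /(definable2_graph szA)]|/(definable2_graph szA)].
Qed.

Lemma definable_map2E (T1 T2 S : dtop D) f : maps2_into T1 T2 S f ->
  definable_map2 T1 T2 S f <->
  definable2 D (dt_dim T1 + dt_dim T2) (dt_dim S) (fun x y =>
    (dt_set T1 (take (dt_dim T1) x) /\ dt_set T2 (drop (dt_dim T1) x)) /\
    y = f (take (dt_dim T1) x) (drop (dt_dim T1) x)).
Proof.
move=> T12f; set n := dt_dim T1.
have szA x : dt_set T1 (take n x) /\ dt_set T2 (drop n x) ->
    size x = n + dt_dim T2 /\ size (f (take n x) (drop n x)) = dt_dim S.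
  case=> T1x T2x; rewrite -(cat_take_drop n x) size_cat.
  rewrite take_size_cat ?drop_size_cat ?(dt_size T1x) //.
  by rewrite (dt_size T2x) (dt_size (T12f _ _ T1x T2x)).
rewrite /definable_map2 (@graph2E _ _ (dt_set T2) f (@dt_size T1)).
by split=> [[_ /(definable2_graph szA)]|/(definable2_graph szA)].
Qed.

End DefinableSpaces.

Section GroupOn.
Variables (T : Type) (S : T -> Prop) (mul : T -> T -> T) (inv : T -> T) (e : T).

Definition group_on := [/\ S e,
  (forall x y, S x -> S y -> S (mul x y)), (forall x, S x -> S (inv x)),
  (forall x y z, S x -> S y -> S z -> mul x (mul y z) = mul (mul x y) z)
  & (forall x, S x -> [/\ mul e x = x, mul x e = x, mul x (inv x) = e & mul (inv x) x = e])].

Hypothesis Hgrp : group_on.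

Lemma group1 : S e. Proof. by case: Hgrp. Qed.
Lemma groupM x y : S x -> S y -> S (mul x y). Proof. by case: Hgrp => _ SM _ _ _; apply: SM. Qed.
Lemma groupV x : S x -> S (inv x). Proof. by case: Hgrp => _ _ SV _ _; apply: SV. Qed.
Lemma mulA x y z : S x -> S y -> S z -> mul x (mul y z) = mul (mul x y) z.
Proof. by case: Hgrp => _ _ _ A _; apply: A. Qed.
Lemma mul1g x : S x -> mul e x = x.
Proof. by move=> Sx; case: Hgrp => _ _ _ _ /(_ x Sx) []. Qed.
Lemma mulg1 x : S x -> mul x e = x.
Proof. by move=> Sx; case: Hgrp => _ _ _ _ /(_ x Sx) []. Qed.
Lemma mulgV x : S x -> mul x (inv x) = e.
Proof. by move=> Sx; case: Hgrp => _ _ _ _ /(_ x Sx) []. Qed.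
Lemma mulVg x : S x -> mul (inv x) x = e.
Proof. by move=> Sx; case: Hgrp => _ _ _ _ /(_ x Sx) []. Qed.

Lemma mulgI x y z : S x -> S y -> S z -> mul x y = mul x z -> y = z.
Proof.
move=> Sx Sy Sz /(congr1 (mul (inv x))).
by rewrite !mulA ?mulVg ?mul1g //; apply: groupV.
Qed.

Lemma inv_uniq x y : S x -> S y -> mul x y = e -> y = inv x.
Proof. by move=> Sx Sy E; apply: (mulgI Sx Sy (groupV Sx)); rewrite E mulgV. Qed.

Lemma invgK x : S x -> inv (inv x) = x.
Proof. by move=> Sx; apply/esym/inv_uniq; [apply: groupV | | apply: mulVg]. Qed.

Lemma invMg x y : S x -> S y -> inv (mul x y) = mul (inv y) (inv x).
Proof.
move=> Sx Sy; have [SVx SVy] := (groupV Sx, groupV Sy).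
apply/esym/inv_uniq; [exact: groupM | exact: groupM |].
by rewrite -mulA ?(mulA Sy) ?mulgV ?mul1g ?mulgV //; apply: groupM.
Qed.

End GroupOn.

Lemma dtgroup_group_on M (D : nat -> mset M -> Prop) (G : dtop D) mul inv e :
  is_dtgroup G mul inv e -> group_on (dt_set G) mul inv e.
Proof.
case=> G1 GA G1m GV [[[GM _] _] [GVin _]]; split=> // x Gx.
by have [? ?] := G1m x Gx; have [? ?] := GV x Gx.
Qed.

Section Quotient.
Variables (M : Type) (lt : M -> M -> Prop) (add : M -> M -> M) (zero : M)
  (D : nat -> mset M -> Prop).
Hypothesis HM : dc_lomin_expansion lt add zero D.
Variables (G X : dtop D) (mulG : seq M -> seq M -> seq M) (invG : seq M -> seq M)
  (eG : seq M) (a : seq M -> seq M -> seq M).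
Hypotheses (HG : is_dtgroup G mulG invG eG) (Ha : is_daction G mulG eG X a).

Let Hog : is_ordered_group lt add zero. Proof. by case: HM. Qed.
Let Hdense : dense_no_endpoints lt. Proof. by case: HM. Qed.
Let HD : is_structure D. Proof. by case: HM. Qed.
Let Hexp : expands_ogroup D lt add. Proof. by case: HM. Qed.
Let Hlomin : locally_o_minimal D lt. Proof. by case: HM => _ _ _ _ []. Qed.
Let Hdc : definably_complete D lt. Proof. by case: HM => _ _ _ _ []. Qed.

Local Notation Gs := (dt_set G).
Local Notation Xs := (dt_set X).
Local Notation dX := (dt_dim X).
Local Notation pX := (dt_pdim X).
Local Notation bX := (dt_base X).
Local Notation definable := (definable D).
Local Notation definable2 := (definable2 D).
Let D_singleton m : D 1 (fun s => s = [:: m]). Proof. by case: Hexp. Qed.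
Local Notation definable2_exl := (definable2_exl HD zero D_singleton).
Local Notation definable2_exl_prefix := (definable2_exl_prefix HD zero D_singleton).
Local Notation definable2_comp := (definable2_comp HD zero D_singleton).
Local Notation choosen := (choosen lt add zero).
Local Notation choosenP := (choosenP Hog Hdense HD Hexp Hlomin Hdc).
Local Notation definable_choosen := (definable_choosen Hog Hdense HD Hexp Hlomin Hdc).

Let Ggrp : group_on Gs mulG invG eG. Proof. exact: dtgroup_group_on HG. Qed.

Lemma act_in g x : Gs g -> Xs x -> Xs (a g x).
Proof. by case: Ha => [[[act_in _] _] _ _]; apply: act_in. Qed.
Lemma act1 x : Xs x -> a eG x = x.
Proof. by case: Ha => _ act1 _; apply: act1. Qed.
Lemma actM g h x : Gs g -> Gs h -> Xs x -> a g (a h x) = a (mulG g h) x.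
Proof. by case: Ha => _ _ actM; apply: actM. Qed.

Definition orbit_rel x y := Xs x /\ exists g, Gs g /\ y = a g x.

Lemma orbit_refl x : Xs x -> orbit_rel x x.
Proof.
by move=> Xx; split=> //; exists eG; rewrite act1 //; split=> //; exact (group1 Ggrp).
Qed.

Lemma orbit_in x y : orbit_rel x y -> Xs y.
Proof. by case=> Xx [g [Gg ->]]; apply: act_in. Qed.

Lemma orbit_sym x y : orbit_rel x y -> orbit_rel y x.
Proof.
move=> xy; split; first exact: orbit_in xy.
case: xy => Xx [g [Gg ->]]; have GVg := groupV Ggrp Gg.
by exists (invG g); rewrite actM // (mulVg Ggrp Gg) act1.
Qed.

Lemma orbit_trans x y z : orbit_rel x y -> orbit_rel y z -> orbit_rel x z.
Proof.
case=> Xx [g [Gg ->]] [_ [h [Gh ->]]]; split=> //.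
by exists (mulG h g); rewrite actM //; split=> //; exact (groupM Ggrp Gh Gg).
Qed.

Lemma definable_orbit : definable2 dX dX orbit_rel.
Proof.
have [da _] : dcmap2 G X X a by case: Ha.
have := definable2_exl_prefix (iffLR (definable_map2E HD da.1) da).
apply: eq_definable => s szs; split=> [[g [szg]]|[Xx [g [Gg ->]]]].
  by rewrite take_size_cat ?drop_size_cat // => -[[Gg Xx] ->]; split=> //; exists g.
by exists g; rewrite take_size_cat ?drop_size_cat ?(dt_size HD Gg).
Qed.

Definition orbit_rep x := choosen dX (orbit_rel x).

Lemma orbit_repP x : Xs x -> orbit_rel x (orbit_rep x).
Proof.
move=> Xx; have szx := dt_size HD Xx.
exact: (choosenP definable_orbit szx szx (orbit_refl Xx)).1.
Qed.

Lemma orbit_rep_in x : Xs x -> Xs (orbit_rep x).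
Proof. by move/orbit_repP/orbit_in. Qed.

Lemma orbit_rep_eq x y : Xs x -> Xs y -> orbit_rep x = orbit_rep y <-> orbit_rel x y.
Proof.
move=> Xx Xy; split=> [E|xy].
  by apply: orbit_trans (orbit_repP Xx) _; rewrite E; apply: orbit_sym (orbit_repP Xy).
congr choosen; apply: functional_extensionality => z; apply: propositional_extensionality.
by split=> [/(orbit_trans (orbit_sym xy))|/(orbit_trans xy)].
Qed.

Lemma orbit_rep_act g x : Gs g -> Xs x -> orbit_rep (a g x) = orbit_rep x.
Proof.
move=> Gg Xx; apply/orbit_rep_eq; [exact: act_in | by [] |].
by apply: orbit_sym; split=> //; exists g.
Qed.

Lemma orbit_rep_id x : Xs x -> orbit_rep (orbit_rep x) = orbit_rep x.
Proof.
move=> Xx; apply/orbit_rep_eq; [exact: orbit_rep_in | by [] |].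
exact: orbit_sym (orbit_repP Xx).
Qed.

Lemma definable_orbit_rep : definable2 dX dX (fun x q => Xs x /\ q = orbit_rep x).
Proof.
apply: eq_definable _ (definable_choosen definable_orbit) => s szs.
split=> [[[t [_ [Xx _]]] ->] //|[Xx ->]]; split=> //.
by exists (take dX s); split; [apply: dt_size | apply: orbit_refl].
Qed.

Definition is_rep q := exists x, Xs x /\ q = orbit_rep x.

Lemma is_rep_in q : is_rep q -> Xs q.
Proof. by case=> x [Xx ->]; apply: orbit_rep_in. Qed.

Lemma is_rep_def : D dX is_rep.
Proof.
apply: D_definable => [|q /is_rep_in/(dt_size HD)] //.
apply: eq_definable _ (definable2_exl definable_orbit_rep) => q _.
by split=> [[x [_ rep]]|[x [Xx ->]]]; [exists x | exists x; rewrite (dt_size HD Xx)].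
Qed.

Lemma is_rep_fixed q : is_rep q -> orbit_rep q = q.
Proof. by case=> x [Xx ->]; apply: orbit_rep_id. Qed.

Definition rep_base_rel y q := exists x, size x = dX /\ bX (y ++ x) /\ (Xs x /\ q = orbit_rep x).
Definition rep_base s := size s = pX + dX /\ rep_base_rel (take pX s) (drop pX s).

Lemma rep_base_def : D (pX + dX) rep_base.
Proof.
exact: definable2_comp (definable2_cat (definableD HD (dt_base_def X))) definable_orbit_rep.
Qed.

Lemma rep_baseE y q : size y = pX ->
  rep_base (y ++ q) <-> exists x, bX (y ++ x) /\ q = orbit_rep x.
Proof.
move=> szy; rewrite /rep_base /rep_base_rel take_size_cat ?drop_size_cat //.
split=> [[_ [x [_ [Byx [_ ->]]]]]|[x [Byx ->]]]; first by exists x.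
have Xx := dt_base_sub szy Byx; have szx := dt_size HD Xx.
by split; [rewrite size_cat szy (dt_size HD (orbit_rep_in Xx)) | exists x].
Qed.

Lemma rep_base_sub y q : size y = pX -> rep_base (y ++ q) -> is_rep q.
Proof.
by move=> szy /(rep_baseE _ szy) [x [Byx ->]]; exists x; split=> //; apply: dt_base_sub Byx.
Qed.

Lemma rep_base_cover q : is_rep q -> exists y, size y = pX /\ rep_base (y ++ q).
Proof.
case=> x [Xx ->]; have [y [szy Byx]] := dt_cover Xx.
by exists y; split=> //; apply/(rep_baseE _ szy); exists x.
Qed.

Lemma act_open g U : Gs g -> dopen X U -> dopen X (fun w => Xs w /\ U (a g w)).
Proof.
move=> Gg Uopen; split=> [w [] //|w [Xw Ugw]].
have [_ [_ cont]] : dcmap2 G X X a by case: Ha.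
have [_ /(_ g w (conj Gg (conj Xw Ugw)))] := cont U Uopen.
case=> U1 [U2 [_ [[_ U2open] [U1g [U2w U12]]]]].
have [y [szy [Byw ByU2]]] := U2open w U2w; exists y; split=> //; split=> // z /ByU2 U2z.
by case: (U12 g z U1g U2z) => _ [].
Qed.

(* Two basic sets around the same orbit are compared after translating one of
   their preimages by the group element relating the two representatives. *)
Lemma rep_base_inter y1 y2 q : size y1 = pX -> size y2 = pX ->
  rep_base (y1 ++ q) -> rep_base (y2 ++ q) ->
  exists y3, size y3 = pX /\ rep_base (y3 ++ q) /\
    forall z, rep_base (y3 ++ z) -> rep_base (y1 ++ z) /\ rep_base (y2 ++ z).
Proof.
move=> szy1 szy2 /(rep_baseE _ szy1) [x1 [B1 ->]] /(rep_baseE _ szy2) [x2 [B2 E]].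
have X1 := dt_base_sub szy1 B1; have X2 := dt_base_sub szy2 B2.
have [_ [g [Gg x2E]]] := (orbit_rep_eq X1 X2).1 E; subst x2.
have [y4 [szy4 [B4 B4sub]]] := (act_open Gg (base_open szy2)).2 x1 (conj X1 B2).
have [y3 [szy3 [B3 B3sub]]] := dt_inter szy1 szy4 B1 B4.
exists y3; split=> //; split=> [|z /(rep_baseE _ szy3) [w [B3w ->]]].
  by apply/(rep_baseE _ szy3); exists x1.
have [B1w /B4sub [Xw B2w]] := B3sub w B3w.
split; first by apply/(rep_baseE _ szy1); exists w.
by apply/(rep_baseE _ szy2); exists (a g w); rewrite orbit_rep_act.
Qed.

Definition quotient_space : dtop D :=
  DTop is_rep_def rep_base_def rep_base_sub rep_base_cover rep_base_inter.

Lemma orbit_rep_maps : maps_into X quotient_space orbit_rep.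
Proof. by move=> x Xx; exists x. Qed.

Lemma orbit_rep_open U :
  dopen X U -> dopen quotient_space (fun q => exists x, U x /\ q = orbit_rep x).
Proof.
case=> UX Uopen; split=> [q [x [Ux ->]]|q [x [Ux ->]]]; first by exists x; split; auto.
have [y [szy [Byx ByU]]] := Uopen x Ux; exists y; split=> //.
split=> [|z /(rep_baseE _ szy) [w [Byw ->]]]; first by apply/(rep_baseE _ szy); exists x.
by exists w; split=> //; apply: ByU.
Qed.

Lemma orbit_rep_continuous : continuous_map X quotient_space orbit_rep.
Proof.
split=> [|U [_ Uopen]]; first exact: orbit_rep_maps.
split=> [x [] //|x [Xx Ux]].
have [y [szy [/(rep_baseE _ szy) [x' [Byx' E]] ByU]]] := Uopen _ Ux.
have {}szy : size y = pX by [].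
have [_ [g [Gg x'E]]] := (orbit_rep_eq Xx (dt_base_sub szy Byx')).1 E; subst x'.
have [y' [szy' [By'x By'sub]]] := (act_open Gg (base_open szy)).2 x (conj Xx Byx').
exists y'; split=> //; split=> // w /By'sub [Xw Bygw]; split=> //.
by apply: ByU; apply/(rep_baseE _ szy); exists (a g w); rewrite orbit_rep_act.
Qed.

Lemma orbit_rep_dcmap : dcmap X quotient_space orbit_rep.
Proof.
split; last exact: orbit_rep_continuous.
exact: (iffRL (definable_mapE HD orbit_rep_maps) definable_orbit_rep).
Qed.

Lemma orbit_rep_universal (T : dtop D) (phi : seq M -> seq M) : dcmap X T phi ->
  (forall g x, Gs g -> Xs x -> phi (a g x) = phi x) ->
  dcmap quotient_space T phi /\ forall x, Xs x -> phi x = phi (orbit_rep x).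
Proof.
move=> [[Tphi dphi] [_ phi_cont]] phi_inv.
have phi_rep x : Xs x -> phi (orbit_rep x) = phi x.
  by move=> Xx; have [_ [g [Gg ->]]] := orbit_repP Xx; apply: phi_inv.
have Qphi : maps_into quotient_space T phi by move=> q /is_rep_in /Tphi.
split=> [|x Xx]; last by rewrite phi_rep.
split; first split=> //.
  apply: (proj2 (iffRL (definable_mapE HD Qphi) _)).
  have := definable2I HD (definable2_fst HD (dt_dim T) (definableD HD is_rep_def))
                         (iffLR (definable_mapE HD Tphi) (conj Tphi dphi)).
  apply: eq_definable => s _; split=> [[Qq [_ ->]] //|[Qq ->]].
  by split=> //; split=> //; apply: is_rep_in.
split=> // U /phi_cont /orbit_rep_open; apply: eq_dopen => q.
split=> [[x [[Xx Ux] ->]]|[[x [Xx ->]] Uq]]; first by split; [exists x | rewrite phi_rep].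
by exists x; rewrite -phi_rep.
Qed.

Lemma quotient_spaceP : is_dquotient G X a quotient_space orbit_rep.
Proof.
split; [exact: orbit_rep_dcmap | exact: orbit_rep_act |].
move=> T phi dphi phi_inv; exists phi; exact: orbit_rep_universal.
Qed.

Section QuotientGroup.
Variables (mulX : seq M -> seq M -> seq M) (invX : seq M -> seq M) (eX : seq M).
Hypotheses (HX : is_dtgroup X mulX invX eX) (GX : forall g, Gs g -> Xs g)
  (mulGX : forall g h, Gs g -> Gs h -> mulG g h = mulX g h)
  (G_normal : forall x g, Xs x -> Gs g -> Gs (mulX (mulX x g) (invX x)))
  (actX : forall g x, Gs g -> Xs x -> a g x = mulX g x).

Let Xgrp : group_on Xs mulX invX eX. Proof. exact: dtgroup_group_on HX. Qed.

Lemma eGX : eG = eX.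
Proof.
have G1 := group1 Ggrp; have Xe := GX G1.
apply: (mulgI Xgrp Xe Xe (group1 Xgrp)).
by rewrite -mulGX // (mul1g Ggrp G1) (mulg1 Xgrp Xe).
Qed.

Lemma invGX g : Gs g -> invG g = invX g.
Proof.
move=> Gg; have GVg := groupV Ggrp Gg.
apply: (inv_uniq Xgrp (GX Gg) (GX GVg)).
by rewrite -mulGX // (mulgV Ggrp) // eGX.
Qed.

Lemma orbit_relX x y : orbit_rel x y <-> Xs x /\ exists g, Gs g /\ y = mulX g x.
Proof. by split=> -[Xx [g [Gg ->]]]; split=> //; exists g; rewrite actX. Qed.

(* [g x * h y = (g * x h x^-1) * x y], and [x h x^-1] lies in the normal
   subgroup [G]. *)
Lemma orbit_mul x y x' y' :
  orbit_rel x x' -> orbit_rel y y' -> orbit_rel (mulX x y) (mulX x' y').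
Proof.
move=> /orbit_relX [Xx [g [Gg ->]]] /orbit_relX [Xy [h [Gh ->]]].
have Gxh := G_normal Xx Gh.
apply/orbit_relX; split; first exact (groupM Xgrp Xx Xy).
exists (mulX g (mulX (mulX x h) (invX x))); split.
  by rewrite -mulGX //; exact (groupM Ggrp Gg Gxh).
have Xg := GX Gg; have Xh := GX Gh; have Xxh := GX Gxh; have XVx := groupV Xgrp Xx.
have XM := groupM Xgrp; have XA := mulA Xgrp.
rewrite -(XA _ _ _ Xg Xx (XM _ _ Xh Xy)) -(XA _ _ _ Xg Xxh (XM _ _ Xx Xy)); congr (mulX g).
rewrite -(XA _ _ _ (XM _ _ Xx Xh) XVx (XM _ _ Xx Xy)) (XA _ _ _ XVx Xx Xy).
by rewrite (mulVg Xgrp Xx) (mul1g Xgrp Xy) (XA _ _ _ Xx Xh Xy).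
Qed.

(* [(g x)^-1 = (x^-1 g^-1 x) * x^-1]. *)
Lemma orbit_inv x x' : orbit_rel x x' -> orbit_rel (invX x) (invX x').
Proof.
move=> /orbit_relX [Xx [g [Gg ->]]].
have Xg := GX Gg; have XVx := groupV Xgrp Xx; have XVg := groupV Xgrp Xg.
have GVg : Gs (invX g) by rewrite -invGX //; exact (groupV Ggrp Gg).
apply/orbit_relX; split=> //.
exists (mulX (mulX (invX x) (invX g)) (invX (invX x))); split; first exact: G_normal.
rewrite (invgK Xgrp Xx) (invMg Xgrp Xg Xx).
have XVxg := groupM Xgrp XVx XVg.
by rewrite -(mulA Xgrp XVxg Xx XVx) (mulgV Xgrp Xx) (mulg1 Xgrp XVxg).
Qed.

Definition quotient_mul q1 q2 := orbit_rep (mulX q1 q2).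
Definition quotient_inv q := orbit_rep (invX q).
Definition quotient_one := orbit_rep eX.

Lemma orbit_rep_mul x y : Xs x -> Xs y ->
  quotient_mul (orbit_rep x) (orbit_rep y) = orbit_rep (mulX x y).
Proof.
move=> Xx Xy; have Rx := orbit_rep_in Xx; have Ry := orbit_rep_in Xy.
apply/orbit_rep_eq; [exact (groupM Xgrp Rx Ry) | exact (groupM Xgrp Xx Xy) |].
exact: orbit_mul (orbit_sym (orbit_repP Xx)) (orbit_sym (orbit_repP Xy)).
Qed.

Lemma orbit_rep_inv x : Xs x -> quotient_inv (orbit_rep x) = orbit_rep (invX x).
Proof.
move=> Xx; have Rx := orbit_rep_in Xx.
apply/orbit_rep_eq; [exact (groupV Xgrp Rx) | exact (groupV Xgrp Xx) |].
exact: orbit_inv (orbit_sym (orbit_repP Xx)).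
Qed.

Local Notation Q := quotient_space.

Lemma quotient_mul_maps : maps2_into Q Q Q quotient_mul.
Proof.
by move=> q1 q2 /is_rep_in Xq1 /is_rep_in Xq2; exists (mulX q1 q2); split=> //;
  exact (groupM Xgrp Xq1 Xq2).
Qed.

Lemma quotient_mul_def : definable_map2 Q Q Q quotient_mul.
Proof.
apply: (iffRL (definable_map2E HD quotient_mul_maps)).
have [_ _ _ _ [[dmulX _] _]] := HX.
have dQQ : definable (dX + dX) (fun s => is_rep (take dX s) /\ is_rep (drop dX s)).
  have drep := definableD HD is_rep_def.
  exact (definableI HD (definable_take HD dX drep) (definable_drop HD dX drep)).
have := definable2_comp (definable2I HD (definable2_fst HD dX dQQ)
  (iffLR (definable_map2E HD dmulX.1) dmulX)) definable_orbit_rep.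
apply: eq_definable => s _; change (dt_dim Q) with dX; change (dt_set Q) with is_rep.
move: (take _ s) (drop _ s) => x q; move: (take dX x) (drop dX x) => x1 x2.
split=> [[w [_ [[Q12 [_ ->]] [_ ->]]]] //|[[Q1 Q2] ->]].
have Xw := groupM Xgrp (is_rep_in Q1) (is_rep_in Q2).
exists (mulX x1 x2); split; first exact (dt_size HD Xw).
by do !split=> //; apply: is_rep_in.
Qed.

Lemma quotient_mul_continuous : continuous_map2 Q Q Q quotient_mul.
Proof.
split=> [|U Uopen]; first exact: quotient_mul_maps.
split=> [q1 q2 [Q1 [Q2 _]] // | q1 q2 [Q1 [Q2 Uq]]].
have [_ _ _ _ [[_ [_ mul_cont]] _]] := HX.
have Xq1 := is_rep_in Q1; have Xq2 := is_rep_in Q2.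
have [_ /(_ q1 q2)] := mul_cont _ (orbit_rep_continuous.2 U Uopen).
case=> [|U1 [U2 [U1open [U2open [U1q1 [U2q2 U12]]]]]].
  by do !split=> //; exact (groupM Xgrp Xq1 Xq2).
exists (fun q => exists x, U1 x /\ q = orbit_rep x), (fun q => exists x, U2 x /\ q = orbit_rep x).
split; first exact: orbit_rep_open U1open.
split; first exact: orbit_rep_open U2open.
split; first by exists q1; rewrite (is_rep_fixed Q1).
split; first by exists q2; rewrite (is_rep_fixed Q2).
move=> _ _ [w1 [U1w1 ->]] [w2 [U2w2 ->]].
have [Xw1 [Xw2 [_ Uw]]] := U12 _ _ U1w1 U2w2.
by do !split; try exact: orbit_rep_maps; rewrite orbit_rep_mul.
Qed.

Lemma quotient_inv_continuous : continuous_map Q Q quotient_inv.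
Proof.
have Qinv : maps_into Q Q quotient_inv.
  by move=> q /is_rep_in Xq; exists (invX q); split=> //; exact (groupV Xgrp Xq).
have [_ _ _ _ [_ [_ inv_cont]]] := HX.
split=> // U /(orbit_rep_continuous.2) /inv_cont /orbit_rep_open.
apply: eq_dopen => q; split=> [[x [[Xx [_ Ux]] ->]]|[Qq Uq]].
  by split; [apply: orbit_rep_maps | rewrite orbit_rep_inv].
have Xq := is_rep_in Qq.
by exists q; rewrite (is_rep_fixed Qq); do !split=> //; exact (groupV Xgrp Xq).
Qed.

Lemma quotient_groupP : is_dtgroup Q quotient_mul quotient_inv quotient_one.
Proof.
have X1 := group1 Xgrp.
split.
- exact: orbit_rep_maps.
- move=> _ _ _ [x [Xx ->]] [y [Xy ->]] [z [Xz ->]].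
  have XM := groupM Xgrp.
  rewrite (orbit_rep_mul Xy Xz) (orbit_rep_mul Xx Xy) (orbit_rep_mul Xx (XM _ _ Xy Xz)).
  by rewrite (orbit_rep_mul (XM _ _ Xx Xy) Xz) (mulA Xgrp Xx Xy Xz).
- move=> _ [x [Xx ->]]; rewrite /quotient_one !orbit_rep_mul //.
  by rewrite (mul1g Xgrp Xx) (mulg1 Xgrp Xx).
- move=> _ [x [Xx ->]]; have XVx := groupV Xgrp Xx.
  by rewrite orbit_rep_inv // !orbit_rep_mul // (mulgV Xgrp Xx) (mulVg Xgrp Xx).
split; last exact: quotient_inv_continuous.
by split; [split; [exact: quotient_mul_maps | exact: quotient_mul_def.2] |
  exact: quotient_mul_continuous].
Qed.

End QuotientGroup.

End Quotient.

Theorem proposition5p6 (M : Type) (lt : M -> M -> Prop) (add : M -> M -> M)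
    (zero : M) (D : nat -> mset M -> Prop)
    (HM : dc_lomin_expansion lt add zero D)
    (G X : dtop D) (mulG : seq M -> seq M -> seq M) (invG : seq M -> seq M)
    (eG : seq M) (HG : is_dtgroup G mulG invG eG)
    (a : seq M -> seq M -> seq M) (Ha : is_daction G mulG eG X a) :
  (exists (Q : dtop D) (pi : seq M -> seq M), is_dquotient G X a Q pi) /\
  (forall (mulX : seq M -> seq M -> seq M) (invX : seq M -> seq M)
          (eX : seq M),
     is_dtgroup X mulX invX eX ->
     (forall g, dt_set G g -> dt_set X g) ->
     (forall g h, dt_set G g -> dt_set G h -> mulG g h = mulX g h) ->
     (forall x g, dt_set X x -> dt_set G g ->
        dt_set G (mulX (mulX x g) (invX x))) ->
     (forall g x, dt_set G g -> dt_set X x -> a g x = mulX g x) ->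
     exists (Q : dtop D) (pi : seq M -> seq M)
            (mulQ : seq M -> seq M -> seq M) (invQ : seq M -> seq M)
            (eQ : seq M),
       [/\ is_dquotient G X a Q pi, is_dtgroup Q mulQ invQ eQ
         & forall x y, dt_set X x -> dt_set X y ->
             pi (mulX x y) = mulQ (pi x) (pi y)]).
Proof.
have quotP := quotient_spaceP HM HG Ha.
split; first by do 2!eexists; exact: quotP.
move=> mulX invX eX HX GX mulGX G_normal actX.
have repM := orbit_rep_mul HM HG Ha HX GX mulGX G_normal actX.
do 5!eexists; split; first exact: quotP.
  exact: quotient_groupP HX GX mulGX G_normal actX.
by move=> x y Xx Xy; rewrite repM.
Qed.
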